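(* Let $N\ge 5$ be an odd integer. If $A$ is an efficiently structured polyomino with square $(N-2)\times(N-2)$ interior, then every space of the interior lying in an odd row of $W$ (i.e. every interior space $(i,j)$ with $i$ and $j$ both odd) is a hole of $A$.
   Context: A polyomino is a finite union of closed unit tiles, meeting only in whole edges, with connected interior; holes are bounded components of the complement, area of a hole = number of unit squares filling it; acyclic means the dual graph (tiles, adjacency along edges) is a tree. A polyomino with $n$ tiles and $h$ holes is efficiently structured if it is acyclic, every hole has area one, and its number of outer (non-hole) boundary edges equals $2\lceil 2\sqrt{n+h}\,\rceil$. $A$ has square $(N-2)\times(N-2)$ interior if its bounding box is $N\times N$ and every space of the outer ring of the bounding box except possibly the four corners is a tile; the interior is the inner $(N-2)\times(N-2)$ square, with spaces indexed $(i,j)$, $1\le i,j\le N-2$ from the top-left, and $W$ the spaces with $i+j$ even. *)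

From HB Require Import structures.
From mathcomp Require Import all_boot all_order all_algebra.
From mathcomp Require Import finmap.
From mathcomp Require Import boolp.
From mathcomp Require Import zify.
Set Implicit Arguments. Unset Strict Implicit. Unset Printing Implicit Defensive.
Import Order.TTheory GRing.Theory Num.Theory.
Local Open Scope fset_scope.

(* A cell (unit square) of the grid: (row, column).  Rows increase downwards,
   columns increase to the right. *)
Definition Cell := (int * int)%type.

Definition adj (c d : Cell) : bool :=
  (`|(c.1 - d.1)%R|%N + `|(c.2 - d.2)%R|%N == 1)%N.

Definition nbrs (c : Cell) : seq Cell :=
  [:: (c.1 + 1, c.2)%R; (c.1 - 1, c.2)%R; (c.1, c.2 + 1)%R; (c.1, c.2 - 1)%R].

Definition reach_in (P : pred Cell) (c d : Cell) : Prop :=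
  P c /\ exists s : seq Cell, [&& path adj c s, all P s & last c s == d].

Definition polyomino (A : {fset Cell}) : Prop :=
  A != fset0 /\ forall a b, a \in A -> b \in A -> reach_in (mem A) a b.

Definition acyclic (A : {fset Cell}) : Prop :=
  ~ exists s : seq Cell, [&& uniq s, (3 <= size s)%N, all (mem A) s & cycle adj s].

Definition reach_compl (A : {fset Cell}) (c d : Cell) : Prop :=
  reach_in [pred x | x \notin A] c d.

Definition hole_cell (A : {fset Cell}) (c : Cell) : Prop :=
  c \notin A /\
  exists B : nat, forall d, reach_compl A c d -> (`|d.1| <= B)%N /\ (`|d.2| <= B)%N.

Definition num_holes (A : {fset Cell}) (h : nat) : Prop :=
  exists s : seq Cell,
    [/\ uniq s, size s = h,
        forall r, r \in s -> hole_cell A r,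
        forall c, hole_cell A c -> exists2 r, r \in s & reach_compl A r c
      & forall r1 r2, r1 \in s -> r2 \in s -> reach_compl A r1 r2 -> r1 = r2].

Definition holes_area_one (A : {fset Cell}) : Prop :=
  forall c, hole_cell A c -> forall d, reach_compl A c d -> d = c.

Definition outer_perimeter (A : {fset Cell}) : nat :=
  \sum_(a <- enum_fset A)
     count (fun d => `[< d \notin A /\ ~ hole_cell A d >]) (nbrs a).

(* ceil (2 * sqrt m) = least k with 4 m <= k^2. *)
Lemma ceil2sqrt_ex (m : nat) : exists k : nat, (4 * m <= k * k)%N.
Proof. exists (4 * m)%N; nia. Qed.

Definition ceil2sqrt (m : nat) : nat := ex_minn (ceil2sqrt_ex m).

Definition efficiently_structured (A : {fset Cell}) : Prop :=
  [/\ acyclic A, holes_area_one A &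
      exists h, num_holes A h /\
        outer_perimeter A = (2 * ceil2sqrt (#|` A| + h))%N].

Definition in_box (N : nat) (x0 y0 : int) (c : Cell) : bool :=
  [&& (x0 <= c.1)%R, (c.1 <= x0 + (N - 1)%:Z)%R, (y0 <= c.2)%R & (c.2 <= y0 + (N - 1)%:Z)%R].

Definition square_interior (A : {fset Cell}) (N : nat) (x0 y0 : int) : Prop :=
  ([/\ (forall a, a \in A -> in_box N x0 y0 a),
      (exists2 a, a \in A & a.1 = x0),
      (exists2 a, a \in A & a.1 = (x0 + (N - 1)%:Z)%R),
      (exists2 a, a \in A & a.2 = y0)
    & (exists2 a, a \in A & a.2 = (y0 + (N - 1)%:Z)%R)]) /\
  (forall i j : nat, (i < N)%N -> (j < N)%N ->
     [|| i == 0%N, i == (N - 1)%N, j == 0%N | j == (N - 1)%N] ->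
     ~~ (((i == 0%N) || (i == N - 1)%N) && ((j == 0%N) || (j == N - 1)%N)) ->
     ((x0 + i%:Z)%R, (y0 + j%:Z)%R) \in A).

From HB Require Import structures.
From mathcomp Require Import all_boot all_order all_algebra.
From mathcomp Require Import finmap boolp zify.
Import Order.TTheory GRing.Theory Num.Theory.
Set Implicit Arguments. Unset Strict Implicit.

(* Let K be the
   set of empty interior cells with i + j odd and suppose K is nonempty.  Two
   empty interior cells are never edge-adjacent (their hole would have area
   two), so an empty cell within king distance one of K is either in K, and then
   all its king neighbours lie in the 3x3 thickening of K, or a non-corner cell
   of the outer ring, which is a tile.  Hence the cells on the rim of the
   thickening are tiles; they form a graph of minimum degree two, so they
   contain a cycle.  Thus every cell of the box with i + j odd is a tile.  Then a
   tile with i, j odd has no tile diagonally next to it (that would close a 2x2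
   square of tiles), so walking along tiles from it one stays within one step of
   such tiles and never reaches the ring tile (x0, y0 + 2).  By connectivity the
   interior cells with i, j odd are empty, and an empty interior cell is a hole
   since the ring encloses it. *)

Section MinDegreeTwoCycle.

Variables (T : eqType) (e : rel T).
Hypotheses (e_sym : symmetric e) (e_irr : irreflexive e).

Definition has_cycle_in (S : seq T) : Prop :=
  exists s, [&& uniq s, 3 <= size s, all (mem S) s & cycle e s].

Definition min_degree2 (S : seq T) : Prop :=
  forall y, y \in S -> exists z1 z2, [/\ z1 \in S, z2 \in S, z1 != z2, e y z1 & e y z2].

Lemma chord_cycle y p z : uniq (y :: p) -> path e y p ->
  z \in p -> z != head y p -> e y z -> has_cycle_in (y :: p).
Proof.
case: p => [//|t0 t] up pp zp zt0 yz; set p := t0 :: t.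
have jp : (index z p < size p)%N by rewrite index_mem.
have j1 : (0 < index z p)%N by rewrite /p /= eq_sym (negbTE zt0).
have take_z : take (index z p).+1 p = rcons (take (index z p) p) z.
  by rewrite (take_nth y jp) nth_index.
exists (y :: take (index z p).+1 p); apply/and4P; split.
- exact: (take_uniq (index z p).+2 up).
- by rewrite /= size_takel.
- apply/allP => w; rewrite in_cons => /orP[/eqP -> | /mem_take wp]; first exact: mem_head.
  by rewrite /= in_cons wp orbT.
- by rewrite /cycle rcons_path take_path // take_z last_rcons e_sym.
Qed.

Lemma extend_path_or_cycle S y t : min_degree2 S -> y \in S -> all (mem S) t ->
  uniq (y :: t) -> path e y t ->
  has_cycle_in S \/ exists2 z, z \in S & (z \notin y :: t) && e z y.
Proof.
move=> degS yS tS ut pt; have [z1 [z2 [z1S z2S z12 yz1 yz2]]] := degS y yS.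
case: (boolP (z1 \in y :: t)) => z1t; last by right; exists z1; rewrite // z1t e_sym.
case: (boolP (z2 \in y :: t)) => z2t; last by right; exists z2; rewrite // z2t e_sym.
left; have sub_S : {subset y :: t <= S}.
  by move=> w; rewrite in_cons => /orP[/eqP -> // | /(allP tS)].
suff [s /and4P[us ss /allP sS cs]] : has_cycle_in (y :: t).
  by exists s; rewrite us ss cs andbT; apply/allP => w /sS /sub_S.
have z1y : z1 != y by apply: contraTneq yz1 => ->; rewrite e_irr.
have z2y : z2 != y by apply: contraTneq yz2 => ->; rewrite e_irr.
rewrite in_cons (negbTE z1y) in z1t; rewrite in_cons (negbTE z2y) in z2t.
have [z1h | z1h] := eqVneq z1 (head y t).
- by apply: (chord_cycle ut pt z2t _ yz2); rewrite -z1h eq_sym.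
- exact: (chord_cycle ut pt z1t z1h yz1).
Qed.

Lemma min_degree2_cycle S : S != [::] -> min_degree2 S -> has_cycle_in S.
Proof.
case: S => [//|x S'] _ degS; set S := x :: S'.
suff /(_ (size S)) [// | [y [t [yS tS ut _ st]]]] : forall n, has_cycle_in S \/
    exists y t, [/\ y \in S, all (mem S) t, uniq (y :: t), path e y t & size t = n].
  have /(uniq_leq_size ut) : {subset y :: t <= S}.
    by move=> w; rewrite in_cons => /orP[/eqP -> // | /(allP tS)].
  by rewrite /= st ltnn.
elim=> [|n [cyc | [y [t [yS tS ut pt st]]]]]; [right | by left |].
  by exists x, [::]; rewrite mem_head.
have [cyc | [z zS /andP[zt zy]]] := extend_path_or_cycle degS yS tS ut pt; first by left.
by right; exists z, (y :: t); split => //=; rewrite ?zy ?zt ?yS ?st ?pt.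
Qed.

End MinDegreeTwoCycle.

Lemma adj_sym : symmetric adj.
Proof. by move=> c d; rewrite /adj; apply/eqP/eqP; lia. Qed.

Lemma adj_irr : irreflexive adj.
Proof. by move=> c; rewrite /adj !subrr. Qed.

Lemma reach_in_closed (P : pred Cell) (C : Cell -> Prop) (c d : Cell) :
  (forall y z, C y -> adj y z -> P z -> C z) -> reach_in P c d -> C c -> C d.
Proof.
move=> closedC [_ [s /and3P[ps Ps /eqP <-]]].
elim: s c ps Ps => [|z s IHs] c //= /andP[cz ps] /andP[Pz Ps] Cc.
exact: IHs ps Ps (closedC c z Cc cz Pz).
Qed.

Local Open Scope ring_scope.

Lemma acyclic_no_square (A : {fset Cell}) (p : Cell) (a b : int) : acyclic A ->
  `|a| = 1 -> `|b| = 1 -> p \in A -> (p.1 + a, p.2) \in A ->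
  (p.1 + a, p.2 + b) \in A -> (p.1, p.2 + b) \in A -> False.
Proof.
case: p => r s acycA a1 b1 pA pa pab pb; apply: acycA.
exists [:: (r, s); (r + a, s); (r + a, s + b); (r, s + b)].
by rewrite /= !inE pA pa pab pb /adj /= !xpair_eqE; lia.
Qed.

Definition near (c d : Cell) : Prop := `|c.1 - d.1| <= 1 /\ `|c.2 - d.2| <= 1.

Definition thick (K : Cell -> Prop) (y : Cell) : Prop := exists2 k, K k & near y k.

Definition rim (K : Cell -> Prop) (y : Cell) : Prop :=
  thick K y /\ exists2 c, near y c & ~ thick K c.

Definition two_rim_nbrs (K : Cell -> Prop) (y : Cell) : Prop :=
  exists z1 z2, [/\ z1 != z2, adj y z1, adj y z2, rim K z1 & rim K z2].

Lemma rim_edge_out (K : Cell -> Prop) (y : Cell) (a b : int) :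
  thick K y -> `|a| + `|b| = 1 -> ~ thick K (y.1 + a, y.2 + b) -> two_rim_nbrs K y.
Proof.
move=> [k Kk yk] ab c_out.
set c := (y.1 + a, y.2 + b).
set o := (y.1 - a, y.2 - b); set l := (y.1 - b, y.2 + a); set r := (y.1 + b, y.2 - a).
have far z : ~ thick K z -> ~ near z k by move=> z_out zk; apply: z_out; exists k.
have rim_via z w : thick K z -> near z w -> ~ thick K w -> rim K z.
  by move=> *; split => //; exists w.
have [yo yl yr] : [/\ adj y o, adj y l & adj y r].
  by split; rewrite /adj /=; apply/eqP; lia.
case: (EM (thick K l)) => [l_in | /[dup] l_out /far lk];
  case: (EM (thick K r)) => [r_in | /[dup] r_out /far rk].
- exists l, r; split => //; first by rewrite xpair_eqE; lia.
  + by apply: (rim_via _ c) => //; rewrite /near /=; lia.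
  + by apply: (rim_via _ c) => //; rewrite /near /=; lia.
- have o_in : thick K o.
    by exists k => //; move: yk (far _ c_out) rk; rewrite /near /=; lia.
  exists o, l; split => //; first by rewrite xpair_eqE; lia.
  + by apply: (rim_via _ r) => //; rewrite /near /=; lia.
  + by apply: (rim_via _ c) => //; rewrite /near /=; lia.
- have o_in : thick K o.
    by exists k => //; move: yk (far _ c_out) lk; rewrite /near /=; lia.
  exists o, r; split => //; first by rewrite xpair_eqE; lia.
  + by apply: (rim_via _ l) => //; rewrite /near /=; lia.
  + by apply: (rim_via _ c) => //; rewrite /near /=; lia.
- by move: yk (far _ c_out) lk rk; rewrite /near /=; lia.
Qed.

Lemma rim_two_nbrs (K : Cell -> Prop) (y : Cell) : rim K y -> two_rim_nbrs K y.
Proof.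
move=> [y_in [c yc c_out]].
have c_ne_y : ~ (c.1 = y.1 /\ c.2 = y.2).
  case: c c_out {yc} => c1 c2 c_out /= [e1 e2].
  by rewrite e1 e2 -surjective_pairing in c_out.
have c_def : c = (y.1 + (c.1 - y.1), y.2 + (c.2 - y.2)).
  by rewrite !subrKC -surjective_pairing.
move: c_out yc c_ne_y; rewrite c_def /near /=.
set a := c.1 - y.1; set b := c.2 - y.2 => c_out yab ab_ne0.
have [ab1 | [a1 b1]] : `|a| + `|b| = 1 \/ `|a| = 1 /\ `|b| = 1 by lia.
  exact: rim_edge_out y_in ab1 c_out.
case: (EM (thick K (y.1 + a, y.2))) => [h_in | h_out]; last first.
  by apply: (rim_edge_out (a := a) (b := 0) y_in); rewrite ?normr0 ?addr0.
case: (EM (thick K (y.1, y.2 + b))) => [v_in | v_out]; last first.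
  by apply: (rim_edge_out (a := 0) (b := b) y_in); rewrite ?normr0 ?add0r ?addr0.
exists (y.1 + a, y.2), (y.1, y.2 + b); split.
- by rewrite xpair_eqE; lia.
- by rewrite /adj /=; apply/eqP; lia.
- by rewrite /adj /=; apply/eqP; lia.
- by split => //; exists (y.1 + a, y.2 + b) => //; rewrite /near /=; lia.
- by split => //; exists (y.1 + a, y.2 + b) => //; rewrite /near /=; lia.
Qed.

Lemma rim_exists (K : Cell -> Prop) (k0 : Cell) (B : int) :
  K k0 -> (forall k : Cell, K k -> k.1 <= B) -> exists y, rim K y.
Proof.
move=> Kk0 K_bounded.
suff /(_ `|B - k0.1|%N.+2) [// | [k Kk]] : forall t : nat,
    (exists y, rim K y) \/ thick K (k0.1 + t%:Z, k0.2).
  by move: (K_bounded k Kk); rewrite /near /=; lia.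
elim=> [|t [rim_ex | t_in]]; [by right; exists k0; rewrite // /near /=; lia | by left |].
case: (EM (thick K (k0.1 + t.+1%:Z, k0.2))) => [|t1_out]; [by right | left].
exists (k0.1 + t%:Z, k0.2); split => //.
by exists (k0.1 + t.+1%:Z, k0.2); rewrite // /near /=; lia.
Qed.

Section SquareInterior.

Variables (N : nat) (x0 y0 : int) (A : {fset Cell}).
Hypothesis sqA : square_interior A N x0 y0.

Definition interior (c : Cell) : bool :=
  [&& x0 < c.1, c.1 < x0 + (N - 1)%:Z, y0 < c.2 & c.2 < y0 + (N - 1)%:Z].

Definition box_corner (c : Cell) : Prop :=
  (c.1 = x0 \/ c.1 = x0 + (N - 1)%:Z) /\ (c.2 = y0 \/ c.2 = y0 + (N - 1)%:Z).

Lemma ring_mem (c : Cell) :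
  in_box N x0 y0 c -> ~~ interior c -> ~ box_corner c -> c \in A.
Proof.
case: sqA => _ ringA; case: c => [r s]; rewrite /in_box /interior /box_corner /=.
move=> /and4P[r_ge r_le s_ge s_le] not_int not_corner.
have -> : (r, s) = (x0 + `|r - x0|%N%:Z, y0 + `|s - y0|%N%:Z) by congr pair; lia.
by apply: ringA; lia.
Qed.

Lemma interior_hole (c : Cell) : interior c -> c \notin A -> hole_cell A c.
Proof.
move=> c_int cA; split => //; exists (`|x0|%N + `|y0|%N + N)%N => d reach_cd.
have : interior d.
  apply: (reach_in_closed (C := interior) _ reach_cd c_int) => y z y_int yz /= zA.
  apply/negPn/negP => z_int; apply: (negP zA); apply: ring_mem;
  by move: y_int z_int yz; rewrite /interior /in_box /box_corner /adj => ? ? /eqP; lia.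
by rewrite /interior; lia.
Qed.

Hypothesis holes1 : holes_area_one A.

Lemma interior_empty_isolated (c d : Cell) :
  interior c -> c \notin A -> d \notin A -> ~~ adj c d.
Proof.
move=> c_int cA dA; apply/negP => cd.
have reach_cd : reach_compl A c d by split => //; exists [:: d]; rewrite /= cd dA eqxx.
by move: cd; rewrite (holes1 (interior_hole c_int cA) reach_cd) adj_irr.
Qed.

Hypothesis N_odd : odd N.

Definition odd_sum (c : Cell) : Prop := ((c.1 - x0 + (c.2 - y0)) %% 2)%Z = 1.

Definition odd_odd (c : Cell) : Prop :=
  ((c.1 - x0) %% 2)%Z = 1 /\ ((c.2 - y0) %% 2)%Z = 1.

Lemma odd_odd_tile_interior (c : Cell) : c \in A -> odd_odd c -> interior c.
Proof.
case: sqA => [[boxA _ _ _ _] _] /boxA; rewrite /in_box /interior /odd_odd.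
by move=> /and4P[? ? ? ?] [? ?]; apply/and4P; split; lia.
Qed.

Lemma odd_sum_box_mem (c : Cell) :
  in_box N x0 y0 c -> ~~ interior c -> odd_sum c -> c \in A.
Proof.
move=> c_box c_int c_odd; apply: ring_mem => //.
(* As N is odd, the four corners of the box have even i + j. *)
by move: c_odd; rewrite /box_corner /odd_sum; lia.
Qed.

Definition empty_odd_sum (c : Cell) : Prop := [/\ interior c, odd_sum c & c \notin A].

Lemma rim_empty_odd_sum_mem (y : Cell) : rim empty_odd_sum y -> y \in A.
Proof.
move=> [[k [k_int k_odd kA] yk] [c yc c_out]]; apply/negPn/negP => yA.
have [y_int | y_ring] := boolP (interior y); last first.
  apply: (negP yA); apply: ring_mem => //.
    by move: yk k_int; rewrite /near /interior /in_box; lia.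
  by move: yk k_int k_odd y_ring; rewrite /near /interior /box_corner /odd_sum; lia.
have not_yk := interior_empty_isolated y_int yA kA.
have y_odd : odd_sum y by move: yk k_odd not_yk; rewrite /near /odd_sum /adj; lia.
by apply: c_out; exists y; [split | move: yc; rewrite /near; lia].
Qed.

Hypothesis acycA : acyclic A.

Lemma odd_sum_mem (c : Cell) : in_box N x0 y0 c -> odd_sum c -> c \in A.
Proof.
move=> c_box c_odd; have [c_int | c_ring] := boolP (interior c); last first.
  exact: odd_sum_box_mem c_box c_ring c_odd.
apply/negPn/negP => cA.
have [y y_rim] : exists y, rim empty_odd_sum y.
  apply: (rim_exists (k0 := c) (B := x0 + N%:Z)) => [| k [k_int _ _]]; first by split.
  by move: k_int; rewrite /interior; lia.
pose S := [seq z <- enum_fset A | `[< rim empty_odd_sum z >]].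
have mem_S z : z \in S = `[< rim empty_odd_sum z >].
  by rewrite mem_filter andb_idr // => /asboolP /rim_empty_odd_sum_mem.
have [s /and4P[s_uniq s_size s_S s_cycle]] : has_cycle_in adj S.
  apply: (min_degree2_cycle adj_sym adj_irr).
  - by apply/eqP => S0; move: (mem_S y); rewrite S0 in_nil => /esym/asboolP.
  - move=> z; rewrite mem_S => /asboolP/rim_two_nbrs[z1 [z2 [z12 yz1 yz2 z1_rim z2_rim]]].
    by exists z1, z2; rewrite !mem_S; split => //; apply/asboolP.
apply: acycA; exists s; rewrite s_uniq s_size s_cycle andbT /=.
by apply: sub_all s_S => z /=; rewrite mem_S => /asboolP /rim_empty_odd_sum_mem.
Qed.

Lemma odd_odd_diag_not_mem (x : Cell) (a b : int) :
  x \in A -> odd_odd x -> `|a| = 1 -> `|b| = 1 -> (x.1 + a, x.2 + b) \notin A.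
Proof.
move=> xA x_oo a1 b1; apply/negP => xabA.
have x_int := odd_odd_tile_interior xA x_oo.
have odd_nbr_mem (u : Cell) : `|u.1 - x.1| + `|u.2 - x.2| = 1 -> u \in A.
  by move=> xu; apply: odd_sum_mem; move: x_int x_oo xu;
    rewrite /interior /in_box /odd_odd /odd_sum; lia.
by apply: (acyclic_no_square acycA a1 b1 xA _ xabA); apply: odd_nbr_mem => /=; lia.
Qed.

Definition odd_odd_tile (x : Cell) : Prop := x \in A /\ odd_odd x.

Definition odd_odd_star (z : Cell) : Prop :=
  odd_odd_tile z \/ exists2 x, odd_odd_tile x & adj z x.

Lemma odd_odd_star_closed (y z : Cell) :
  odd_odd_star y -> adj y z -> z \in A -> odd_odd_star z.
Proof.
move=> [y_tile | [x [xA x_oo] yx]] yz zA; first by right; exists y; rewrite // adj_sym.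
have [z_oo | z_not_oo] := EM (odd_odd z); first by left.
have [a1 b1] : `|z.1 - x.1| = 1 /\ `|z.2 - x.2| = 1.
  by move: yx yz x_oo z_not_oo; rewrite /adj /odd_odd => /eqP ? /eqP ?; lia.
have := odd_odd_diag_not_mem xA x_oo a1 b1.
by rewrite !subrKC -surjective_pairing zA.
Qed.

End SquareInterior.

Local Close Scope ring_scope.

Theorem lemma9 (N : nat) : (5 <= N)%N -> odd N ->
  forall (A : {fset Cell}) (x0 y0 : int),
    polyomino A -> efficiently_structured A -> square_interior A N x0 y0 ->
    forall i j : nat, (1 <= i <= N - 2)%N -> (1 <= j <= N - 2)%N ->
      odd i -> odd j -> hole_cell A ((x0 + i%:Z)%R, (y0 + j%:Z)%R).
Proof.
move=> N_ge5 N_odd A x0 y0 [_ connA] [acycA holes1 _] sqA i j i_range j_range oi oj.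
set c := (x0 + i%:Z, y0 + j%:Z)%R.
have c_int : interior N x0 y0 c by rewrite /interior /=; lia.
apply: (interior_hole sqA c_int); apply/negP => cA.
set t := (x0, y0 + 2%:Z)%R.
have tA : t \in A by apply: (ring_mem sqA); rewrite /in_box /interior /box_corner /=; lia.
have c_star : odd_odd_star x0 y0 A c by left; split; rewrite // /odd_odd /=; lia.
have star_closed := odd_odd_star_closed sqA holes1 N_odd acycA.
have := reach_in_closed star_closed (connA c t cA tA) c_star.
case=> [[_ t_oo] | [x [_ x_oo] tx]]; first by move: t_oo; rewrite /odd_odd /=; lia.
by move: x_oo tx; rewrite /odd_odd /adj /= => x_oo /eqP; lia.
Qed.
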